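(* Let $\mathcal{C}$ be a closed convex set with $\overline\Pi=\mathcal{C}\cap\Pi$ closed and convex. Let $S=(x_1,\dots,x_m)$ be drawn i.i.d. from $\mathcal{D}_{\mathcal{X}}$ and let $\widehat{\mathcal{D}}_{\mathcal{X}}$ be its empirical distribution. Define $$\mathcal{F}=\{x\mapsto\mathsf{B}_F(\pi(x)\parallel\pi_0(x)):\pi\in\overline\Pi\}\cup\{x\mapsto\mathsf{B}_F(\pi'(x)\parallel\pi(x)):\pi,\pi'\in\overline\Pi\},\qquad \epsilon_m=\sup_{f\in\mathcal{F}}\big|\mathbb{E}_{x\sim\mathcal{D}_{\mathcal{X}}}[f(x)]-\mathbb{E}_{x\sim\widehat{\mathcal{D}}_{\mathcal{X}}}[f(x)]\big|.$$ Let $\widehat\pi$ be a minimizer of $\pi\mapsto\mathbb{E}_{x\sim\mathcal{D}_{\mathcal{X}}}[\mathsf{B}_F(\pi(x)\parallel\pi_0(x))]$ over $\overline\Pi$ and $\widehat\pi_S$ a minimizer of $\pi\mapsto\mathbb{E}_{x\sim\widehat{\mathcal{D}}_{\mathcal{X}}}[\mathsf{B}_F(\pi(x)\parallel\pi_0(x))]$ over $\overline\Pi$. Assume $\pi^*\in\overline\Pi$. Then $$\mathbb{E}_{\mathcal{D}_{\mathcal{X}}}[\mathsf{B}_F(\pi^*(x)\parallel\widehat\pi_S(x))]\le\mathbb{E}_{\mathcal{D}_{\mathcal{X}}}[\mathsf{B}_F(\pi^*(x)\parallel\widehat\pi(x))]+6\epsilon_m+\mathbb{E}_{\mathcal{D}_{\mathcal{X}}}\big[\mathsf{B}_F(\pi^*(x)\parallel\pi_0(x))-\mathsf{B}_F(\widehat\pi(x)\parallel\pi_0(x))\big].$$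 In particular, if $\pi^*=\widehat\pi$, then $\mathbb{E}_{\mathcal{D}_{\mathcal{X}}}[\mathsf{B}_F(\pi^*(x)\parallel\widehat\pi_S(x))]\le\mathbb{E}_{\mathcal{D}_{\mathcal{X}}}[\mathsf{B}_F(\pi^*(x)\parallel\widehat\pi(x))]+6\epsilon_m$.
   Context: $\mathcal{X},\mathcal{Y}$ finite; models are maps $\pi\colon\mathcal{X}\to\Delta(\mathcal{Y})$; $\Pi\subseteq\Delta(\mathcal{Y})^{\mathcal{X}}$ closed and convex; $\pi_0$ a baseline model; $\pi^*$ a reference model; $\mathcal{D}_{\mathcal{X}}$ a full-support distribution on $\mathcal{X}$. $F$ is convex and differentiable on the interior of its domain (containing $\Delta(\mathcal{Y})$, relevant values lying where $\nabla F$ is defined), $\mathsf{B}_F(p\parallel q)=F(p)-F(q)-\langle\nabla F(q),p-q\rangle$. *)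

From mathcomp Require Import all_boot all_order all_algebra.
From mathcomp Require Import all_classical all_reals all_analysis.
Import numFieldNormedType.Exports.
Import Order.TTheory GRing.Theory Num.Theory.
Set Implicit Arguments. Unset Strict Implicit. Unset Printing Implicit Defensive.
Local Open Scope ring_scope.
Local Open Scope classical_set_scope.

(* Points of R^Y are row vectors 'rV[R]_#|Y|, coordinate y being enum_rank y.
   The simplex Delta(Y): nonnegative entries summing to one. *)
Definition simplex (R : realType) (Y : finType) : set 'rV[R]_#|Y| :=
  [set p | (forall j, 0 <= p 0 j) /\ \sum_j p 0 j = 1].

Definition is_model (R : realType) (X Y : finType) (pi : X -> 'rV[R]_#|Y|) :=
  forall x, simplex (pi x).

Definition convex_vset (R : realType) (n : nat) (D : set 'rV[R]_n) :=
  forall p q, D p -> D q -> forall t : R, 0 <= t <= 1 ->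
    D ((1 - t) *: p + t *: q).

Definition convex_mset (R : realType) (X : finType) (n : nat)
  (A : set (X -> 'rV[R]_n)) :=
  forall f g, A f -> A g -> forall t : R, 0 <= t <= 1 ->
    A (fun x => (1 - t) *: f x + t *: g x).

(* Closedness in the (product = Euclidean, X finite) topology. *)
Definition closed_mset (R : realType) (X : finType) (n : nat)
  (A : set (X -> 'rV[R]_n)) := closed (A : set {ptws X -> 'rV[R]_n}).

Definition convex_fun_on (R : realType) (n : nat) (D : set 'rV[R]_n)
  (F : 'rV[R]_n -> R) :=
  forall p q, D p -> D q -> forall t : R, 0 <= t <= 1 ->
    F ((1 - t) *: p + t *: q) <= (1 - t) * F p + t * F q.

(* Bregman divergence B_F(p || q) = F p - F q - <grad F(q), p - q>,
   the inner product with the gradient being the differential 'd F q. *)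
Definition bregman (R : realType) (n : nat) (F : 'rV[R]_n -> R)
  (p q : 'rV[R]_n) : R :=
  F p - F q - 'd F q (p - q).

Definition expect (R : realType) (X : finType) (d : X -> R) (f : X -> R) : R :=
  \sum_x d x * f x.

Definition emp_expect (R : realType) (X : finType) (m : nat)
  (S : m.-tuple X) (f : X -> R) : R :=
  m%:R^-1 * \sum_(i < m) f (tnth S i).

Definition bregman_class (R : realType) (X Y : finType)
  (F : 'rV[R]_#|Y| -> R) (Pibar : set (X -> 'rV[R]_#|Y|))
  (pi0 : X -> 'rV[R]_#|Y|) : set (X -> R) :=
  [set f | exists pi, Pibar pi /\ f = (fun x => bregman F (pi x) (pi0 x))] `|`
  [set f | exists pi pi', [/\ Pibar pi, Pibar pi' &
            f = (fun x => bregman F (pi' x) (pi x))]].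

Definition eps_m (R : realType) (X : finType) (d : X -> R) (m : nat)
  (S : m.-tuple X) (cls : set (X -> R)) : \bar R :=
  ereal_sup [set (`|expect d f - emp_expect S f|)%:E | f in cls].

From mathcomp Require Import all_boot all_order all_algebra.
From mathcomp Require Import all_classical all_reals all_analysis.
From mathcomp Require Import ring lra.
Import numFieldNormedType.Exports.
Import Order.TTheory GRing.Theory Num.Theory.
Set Implicit Arguments. Unset Strict Implicit. Unset Printing Implicit Defensive.
Local Open Scope ring_scope.
Local Open Scope classical_set_scope.

(* The empirical minimizer pihatS is a Bregman projection of pi0 onto the
   convex set Pibar for the empirical risk.  Its first-order optimality along
   the segment towards pistar, combined with the three-point identity for
   Bregman divergences, gives the generalized Pythagorean inequality
     E_S[B(pistar || pihatS)] <= E_S[B(pistar || pi0)] - E_S[B(pihatS || pi0)].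
   Replacing each of the three empirical means by its population mean costs one
   eps_m, and the population minimality of pihat bounds -E[B(pihatS || pi0)]
   by -E[B(pihat || pi0)]; this already gives the bound with 3 eps_m, and the
   stated one follows from B(pistar || pihat) >= 0. *)

Lemma near_at_right0_itv (R : realFieldType) (P : R -> Prop) :
  (forall t, 0 < t <= 1 -> P t) -> \forall t \near 0^'+, P t.
Proof.
move=> itvP; near=> t; apply: itvP; apply/andP; split.
  by near: t; exact: nbhs_right_gt.
by near: t; exact: nbhs_right_le.
Unshelve. all: by end_near. Qed.

Lemma differentiable_cvg_at_right (R : realType) (V : normedModType R)
  (F : V -> R) (q v : V) : differentiable F q ->
  t^-1 * (F (q + t *: v) - F q) @[t --> 0^'+] --> 'd F q v.
Proof.
move=> dFq; rewrite -deriveE //; apply: cvg_dnbhs_at_right.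
have -> : (fun t => t^-1 * (F (q + t *: v) - F q)) =
          (fun t => t^-1 *: ((F \o shift q) (t *: v) - F q)).
  by apply/funext => t /=; rewrite [q + _]addrC.
exact: (@diff_derivable _ _ _ _ _ v dFq).
Qed.

Lemma convex_combinationE (R : pzRingType) (V : lmodType R) (p q : V) (t : R) :
  (1 - t) *: q + t *: p = q + t *: (p - q).
Proof. by rewrite scalerBr scalerBl scale1r addrA addrAC. Qed.

Section Bregman.
Variables (R : realType) (n : nat) (F : 'rV[R]_n -> R).

Lemma bregman_ge0 (D : set 'rV[R]_n) p q :
  convex_fun_on D F -> D p -> D q -> differentiable F q -> 0 <= bregman F p q.
Proof.
move=> cvxF Dp Dq dFq; rewrite /bregman subr_ge0.
apply: (cvgr_to_le (differentiable_cvg_at_right (v := p - q) dFq)).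
apply: near_at_right0_itv => t /andP[t_gt0 t_le1].
rewrite ler_pdivrMl //.
have := cvxF q p Dq Dp t; rewrite convex_combinationE t_le1 ltW // => /(_ isT).
lra.
Qed.

(* The linear maps 'd F _ are generalized before rewriting with linearD:
   matching against the concrete differentials is prohibitively slow. *)
Lemma bregman_three_point (r p q : 'rV[R]_n) :
  bregman F r q - bregman F p q - bregman F r p =
  'd F p (r - p) - 'd F q (r - p).
Proof.
have split_rq : r - q = (r - p) + (p - q) by exact: (esym (subrKA p r (- q))).
rewrite /bregman split_rq; move: ('d F q) ('d F p) => Lq Lp.
by rewrite linearD; ring.
Qed.

Lemma bregman_right_quotient (p v q : 'rV[R]_n) (t : R) : t != 0 ->
  t^-1 * (bregman F (p + t *: v) q - bregman F p q) =
  t^-1 * (F (p + t *: v) - F p) - 'd F q v.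
Proof.
move=> t_neq0; have shift_pq : p + t *: v - q = (p - q) + t *: v.
  exact: addrAC.
rewrite /bregman shift_pq; move: ('d F q) => Lq.
by rewrite linearD linearZ /= -[t *: Lq v]/(t * Lq v); field.
Qed.

End Bregman.

Definition wsum (R : pzRingType) (X I : finType) (w : I -> R) (s : I -> X)
  (f : X -> R) : R :=
  \sum_i w i * f (s i).

Lemma wsumB (R : pzRingType) (X I : finType) (w : I -> R) (s : I -> X)
  (f g : X -> R) :
  wsum w s (fun x => f x - g x) = wsum w s f - wsum w s g.
Proof. by rewrite /wsum -sumrB; apply: eq_bigr => i _; rewrite mulrBr. Qed.

Lemma mulr_wsumr (R : comPzRingType) (X I : finType) (w : I -> R) (s : I -> X)
  (c : R) (f : X -> R) :
  c * wsum w s f = wsum w s (fun x => c * f x).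
Proof. by rewrite /wsum mulr_sumr; apply: eq_bigr => i _; rewrite mulrCA. Qed.

Lemma cvg_wsum (R : numFieldType) (X I : finType) (w : I -> R) (s : I -> X)
  (T : Type) (G : set_system T) {FG : Filter G} (f : T -> X -> R) (l : X -> R) :
  (forall x, f t x @[t --> G] --> l x) ->
  wsum w s (f t) @[t --> G] --> wsum w s l.
Proof.
move=> fl; apply: cvg_big => [|i _]; first exact: add_continuous.
exact: cvgMl_tmp.
Qed.

Lemma expectB (R : realType) (X : finType) (d f g : X -> R) :
  expect d (fun x => f x - g x) = expect d f - expect d g.
Proof. exact: (wsumB d id). Qed.

Lemma emp_expectE (R : realType) (X : finType) (m : nat) (S : m.-tuple X)
  (f : X -> R) :
  emp_expect S f = wsum (fun=> m%:R^-1) (tnth S) f.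
Proof. by rewrite /emp_expect mulr_sumr. Qed.

Section BregmanProjection.
Variables (R : realType) (n : nat) (F : 'rV[R]_n -> R) (X I : finType).
Variables (w : I -> R) (s : I -> X) (q : X -> 'rV[R]_n).

Local Notation risk pi := (wsum w s (fun x => bregman F (pi x) (q x))).

Lemma bregman_risk_first_order (P : set (X -> 'rV[R]_n)) (p r : X -> 'rV[R]_n) :
  convex_mset P -> P p -> P r -> (forall x, differentiable F (p x)) ->
  (forall pi, P pi -> risk p <= risk pi) ->
  0 <= wsum w s (fun x => 'd F (p x) (r x - p x) - 'd F (q x) (r x - p x)).
Proof.
move=> cvxP Pp Pr dFp p_min.
pose quotient t := wsum w s (fun x =>
  t^-1 * (F (p x + t *: (r x - p x)) - F (p x)) - 'd F (q x) (r x - p x)).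
apply: (@cvgr_to_ge _ 0^'+ _ _ quotient).
  apply: cvg_wsum => x; apply: cvgB (cvg_cst _).
  exact: differentiable_cvg_at_right.
apply: near_at_right0_itv => t /andP[t_gt0 t_le1].
have := p_min _ (cvxP p r Pp Pr t _); rewrite t_le1 ltW // => /(_ isT).
rewrite -subr_ge0 -wsumB => gain.
have -> : quotient t = t^-1 * wsum w s (fun x =>
    bregman F ((1 - t) *: p x + t *: r x) (q x) - bregman F (p x) (q x)).
  rewrite mulr_wsumr; apply: eq_bigr => i _.
  by rewrite convex_combinationE bregman_right_quotient ?gt_eqF.
by rewrite mulr_ge0 // invr_ge0 ltW.
Qed.

Lemma bregman_pythagoras (P : set (X -> 'rV[R]_n)) (p r : X -> 'rV[R]_n) :
  convex_mset P -> P p -> P r -> (forall x, differentiable F (p x)) ->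
  (forall pi, P pi -> risk p <= risk pi) ->
  wsum w s (fun x => bregman F (r x) (p x)) <= risk r - risk p.
Proof.
move=> cvxP Pp Pr dFp p_min; rewrite -subr_ge0 -!wsumB.
under eq_fun do rewrite bregman_three_point.
exact: (bregman_risk_first_order cvxP Pp Pr dFp p_min).
Qed.

End BregmanProjection.

Section EmpiricalMinimizer.
Variables (R : realType) (X Y : finType) (F : 'rV[R]_#|Y| -> R).
Variables (Pibar : set (X -> 'rV[R]_#|Y|)).
Variables (pi0 pistar pihat pihatS : X -> 'rV[R]_#|Y|).
Variables (dX : X -> R) (m : nat) (S : m.-tuple X).
Hypothesis cvx_Pibar : convex_mset Pibar.
Hypothesis dF : forall pi, Pibar pi -> forall x, differentiable F (pi x).
Hypotheses (hatS_in : Pibar pihatS) (star_in : Pibar pistar).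
Hypothesis hat_min : forall pi, Pibar pi ->
  expect dX (fun x => bregman F (pihat x) (pi0 x))
  <= expect dX (fun x => bregman F (pi x) (pi0 x)).
Hypothesis hatS_min : forall pi, Pibar pi ->
  emp_expect S (fun x => bregman F (pihatS x) (pi0 x))
  <= emp_expect S (fun x => bregman F (pi x) (pi0 x)).

Lemma empirical_pythagoras :
  emp_expect S (fun x => bregman F (pistar x) (pihatS x)) <=
  emp_expect S (fun x => bregman F (pistar x) (pi0 x)) -
  emp_expect S (fun x => bregman F (pihatS x) (pi0 x)).
Proof.
rewrite !emp_expectE.
apply: bregman_pythagoras cvx_Pibar hatS_in star_in (dF hatS_in) _.
by move=> pi /hatS_min; rewrite !emp_expectE.
Qed.

Lemma excess_risk_le (e : R) :
  (forall f, bregman_class F Pibar pi0 f ->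
     `|expect dX f - emp_expect S f| <= e) ->
  expect dX (fun x => bregman F (pistar x) (pihatS x)) <=
  expect dX (fun x => bregman F (pistar x) (pi0 x) - bregman F (pihat x) (pi0 x))
  + 3 * e.
Proof.
move=> dev.
have star_hatS : bregman_class F Pibar pi0
    (fun x => bregman F (pistar x) (pihatS x)) by right; exists pihatS, pistar.
have star_0 : bregman_class F Pibar pi0
    (fun x => bregman F (pistar x) (pi0 x)) by left; exists pistar.
have hatS_0 : bregman_class F Pibar pi0
    (fun x => bregman F (pihatS x) (pi0 x)) by left; exists pihatS.
have := empirical_pythagoras; have := hat_min hatS_in.
move: (dev _ star_hatS) (dev _ star_0) (dev _ hatS_0).
rewrite expectB !ler_norml => /andP[? ?] /andP[? ?] /andP[? ?]; lra.
Qed.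

End EmpiricalMinimizer.

Lemma eps_m_ubound (R : realType) (X : finType) (d : X -> R) (m : nat)
  (S : m.-tuple X) (cls : set (X -> R)) (f : X -> R) :
  cls f -> ((`|expect d f - emp_expect S f|)%:E <= eps_m d S cls)%E.
Proof. by move=> cls_f; apply: ereal_sup_ubound; exists f. Qed.

Lemma lee_EFin_addM (R : realType) (x y k : R) (e : \bar R) :
  0 < k -> (-oo < e)%E -> (forall r, e = r%:E -> x <= y + k * r) ->
  (x%:E <= y%:E + k%:E * e)%E.
Proof.
move=> k_gt0; case: e => [r _ /(_ r erefl) | _ _ | //].
  by rewrite -EFinM -EFinD lee_fin.
by rewrite gt0_muley ?lte_fin // addey // leey.
Qed.

Theorem theorem3 (R : realType) (X Y : finType)
  (F : 'rV[R]_#|Y| -> R) (D : set 'rV[R]_#|Y|)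
  (Pi C : set (X -> 'rV[R]_#|Y|))
  (pi0 pistar pihat pihatS : X -> 'rV[R]_#|Y|)
  (dX : X -> R) (m : nat) (S : m.-tuple X) :
  (* F convex on its domain D, which contains the simplex *)
  convex_vset D -> @simplex R Y `<=` D -> convex_fun_on D F ->
  (* Pi: closed convex set of models *)
  (forall pi, Pi pi -> is_model pi) -> closed_mset Pi -> convex_mset Pi ->
  (* C closed convex, Pibar = C :&: Pi closed convex *)
  closed_mset C -> convex_mset C ->
  closed_mset (C `&` Pi) -> convex_mset (C `&` Pi) ->
  (* baseline model; full-support distribution on X *)
  is_model pi0 ->
  (forall x, 0 < dX x) -> \sum_x dX x = 1 ->
  (* nonempty sample *)
  (0 < m)%N ->
  (* relevant values lie where the gradient of F is defined *)
  (forall x, differentiable F (pi0 x)) ->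
  (forall pi, (C `&` Pi) pi -> forall x, differentiable F (pi x)) ->
  (* population and empirical minimizers over Pibar *)
  (C `&` Pi) pihat ->
  (forall pi, (C `&` Pi) pi ->
     expect dX (fun x => bregman F (pihat x) (pi0 x))
     <= expect dX (fun x => bregman F (pi x) (pi0 x))) ->
  (C `&` Pi) pihatS ->
  (forall pi, (C `&` Pi) pi ->
     emp_expect S (fun x => bregman F (pihatS x) (pi0 x))
     <= emp_expect S (fun x => bregman F (pi x) (pi0 x))) ->
  (* reference model in Pibar *)
  (C `&` Pi) pistar ->
  let eps := eps_m dX S (bregman_class F (C `&` Pi) pi0) in
  ((expect dX (fun x => bregman F (pistar x) (pihatS x)))%:E
   <= (expect dX (fun x => bregman F (pistar x) (pihat x))
       + expect dX (fun x => bregman F (pistar x) (pi0 x)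
                             - bregman F (pihat x) (pi0 x)))%:E
      + 6%:E * eps)%E
  /\
  (pistar = pihat ->
   ((expect dX (fun x => bregman F (pistar x) (pihatS x)))%:E
    <= (expect dX (fun x => bregman F (pistar x) (pihat x)))%:E
       + 6%:E * eps)%E).
Proof.
move=> _ sub_D cvxF models _ _ _ _ _ cvx_Pibar _ dX_gt0 _ _ _ dF
  hat_in hat_min hatS_in hatS_min star_in eps.
have star_hat_ge0 : 0 <= expect dX (fun x => bregman F (pistar x) (pihat x)).
  apply: sumr_ge0 => x _; apply: mulr_ge0; first exact: ltW.
  exact: (bregman_ge0 cvxF (sub_D _ (models _ star_in.2 x))
                           (sub_D _ (models _ hat_in.2 x)) (dF _ hat_in x)).
have star_0 : bregman_class F (C `&` Pi) pi0
    (fun x => bregman F (pistar x) (pi0 x)) by left; exists pistar.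
have bound : ((expect dX (fun x => bregman F (pistar x) (pihatS x)))%:E
   <= (expect dX (fun x => bregman F (pistar x) (pihat x))
       + expect dX (fun x => bregman F (pistar x) (pi0 x)
                             - bregman F (pihat x) (pi0 x)))%:E
      + 6%:E * eps)%E.
  apply: lee_EFin_addM => // [|e eps_e].
    by apply: lt_le_trans (eps_m_ubound _ _ star_0); rewrite ltNyr.
  have dev f : bregman_class F (C `&` Pi) pi0 f ->
      `|expect dX f - emp_expect S f| <= e.
    by move/(eps_m_ubound dX S); rewrite -/eps eps_e lee_fin.
  have e_ge0 : 0 <= e := le_trans (normr_ge0 _) (dev _ star_0).
  have := excess_risk_le cvx_Pibar dF hatS_in star_in hat_min hatS_min dev.
  lra.
split=> // star_hat; move: bound.
by rewrite star_hat expectB subrr addr0.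
Qed.
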